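(* Let $X$ be any one of the sequences $F,L,J,j,P,Q$. For integers $a,b,c,d,e$ put $$\Delta=X_{d-a}X_{e-b}-X_{e-a}X_{d-b},\quad \Delta_1=X_{d-c}X_{e-b}-X_{e-c}X_{d-b},\quad \Delta_2=X_{d-a}X_{e-c}-X_{e-a}X_{d-c}.$$ Let $k,m$ be integers. Provided every denominator appearing below is nonzero and, when $k<0$, the base of every power appearing is nonzero: $$\sum_{r=0}^k\left(\frac{\Delta}{\Delta_1}\right)^rX_{m-k(a-c)-b+c+(a-c)r}=\frac{\Delta}{\Delta_2}\left(\frac{\Delta}{\Delta_1}\right)^kX_m-\frac{\Delta_1}{\Delta_2}X_{m-(k+1)(a-c)},$$ $$\sum_{r=0}^k\left(\frac{\Delta}{\Delta_2}\right)^rX_{m-k(b-c)-a+c+(b-c)r}=\frac{\Delta}{\Delta_1}\left(\frac{\Delta}{\Delta_2}\right)^kX_m-\frac{\Delta_2}{\Delta_1}X_{m-(k+1)(b-c)},$$ $$\sum_{r=0}^k\left(\frac{-\Delta_2}{\Delta_1}\right)^rX_{m-k(a-b)+b-c+(a-b)r}=\frac{\Delta_2}{\Delta}\left(\frac{-\Delta_2}{\Delta_1}\right)^kX_m+\frac{\Delta_1}{\Delta}X_{m-(k+1)(a-b)}.$$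
   Context: All sequences are indexed by $n\in\mathbb Z$. Fibonacci numbers $F_n$ and Lucas numbers $L_n$: $F_n=F_{n-1}+F_{n-2}$, $L_n=L_{n-1}+L_{n-2}$ for all $n\in\mathbb Z$, with $F_0=0,F_1=1,L_0=2,L_1=1$ (so $F_{-n}=(-1)^{n-1}F_n$, $L_{-n}=(-1)^nL_n$). Jacobsthal numbers $J_n$ and Jacobsthal–Lucas numbers $j_n$: $J_n=J_{n-1}+2J_{n-2}$, $j_n=j_{n-1}+2j_{n-2}$ for all $n\in\mathbb Z$, with $J_0=0,J_1=1,j_0=2,j_1=1$ (so $J_{-n}=(-1)^{n-1}2^{-n}J_n$, $j_{-n}=(-1)^n2^{-n}j_n$, rational for negative index). Pell numbers $P_n$ and Pell–Lucas numbers $Q_n$: $P_n=2P_{n-1}+P_{n-2}$, $Q_n=2Q_{n-1}+Q_{n-2}$ for all $n\in\mathbb Z$, with $P_0=0,P_1=1,Q_0=2,Q_1=2$ (so $P_{-n}=(-1)^{n-1}P_n$, $Q_{-n}=(-1)^nQ_n$). Summation convention: for an integer $k<0$, $\sum_{r=0}^k f_r$ means $-\sum_{r=k+1}^{-1} f_r$ (in particular it equals $0$ when $k=-1$). *)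

From HB Require Import structures.
From mathcomp Require Import all_boot all_order all_algebra.
Set Implicit Arguments. Unset Strict Implicit. Unset Printing Implicit Defensive.
Import Order.TTheory GRing.Theory Num.Theory.
Local Open Scope ring_scope.

(* Second-order linear recurrence W_n = p W_{n-1} + q W_{n-2} on all of Z,
   with W_0 = w0, W_1 = w1 (q <> 0 in all our instances). *)
Fixpoint recfwd (p q w0 w1 : rat) (n : nat) : rat * rat :=
  match n with
  | 0%N => (w0, w1)
  | n'.+1 => let '(x, y) := recfwd p q w0 w1 n' in (y, p * y + q * x)
  end.
(* recbwd n = (W_{-n}, W_{-n+1}) *)
Fixpoint recbwd (p q w0 w1 : rat) (n : nat) : rat * rat :=
  match n with
  | 0%N => (w0, w1)
  | n'.+1 => let '(x, y) := recbwd p q w0 w1 n' in ((y - p * x) / q, x)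
  end.
Definition recseq (p q w0 w1 : rat) (n : int) : rat :=
  match n with
  | Posz k => (recfwd p q w0 w1 k).1
  | Negz k => (recbwd p q w0 w1 k.+1).1   (* Negz k = -(k+1) *)
  end.

Definition Fib : int -> rat := recseq 1 1 0 1.
Definition Luc : int -> rat := recseq 1 1 2 1.
Definition Jac : int -> rat := recseq 1 2 0 1.
Definition JacL : int -> rat := recseq 1 2 2 1.
Definition Pell : int -> rat := recseq 2 1 0 1.
Definition PellL : int -> rat := recseq 2 1 2 2.

(* sum_{r=0}^k f r, with the convention: for k < 0 it is -sum_{r=k+1}^{-1} f r. *)
Definition sumZ (k : int) (f : int -> rat) : rat :=
  match k with
  | Posz n => \sum_(0 <= i < n.+1) f (Posz i)
  | Negz n => - \sum_(0 <= i < n) f (- (Posz i.+1))  (* k = -(n+1); r ranges over -n..-1 *)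
  end.

From HB Require Import structures.
From mathcomp Require Import all_boot all_order all_algebra.
From mathcomp Require Import zify ring.
Set Implicit Arguments. Unset Strict Implicit. Unset Printing Implicit Defensive.
Import Order.TTheory GRing.Theory Num.Theory.
Local Open Scope ring_scope.

(* The solutions of [W_(n+2) = p W_(n+1) + q W_n] with [q != 0] form a
   two-dimensional space, so the three shifts [n |-> W_(n-a)], [W_(n-b)],
   [W_(n-c)] are linearly dependent; expanding in the basis of fundamental
   solutions gives [D W_(n-c) = D1 W_(n-a) + D2 W_(n-b)].  Multiplying by the
   right power of the ratio of two coefficients turns each summand into a
   difference of consecutive terms, and the sums telescope. *)

Definition recurrent {R : pzRingType} (p q : R) (s : int -> R) :=
  forall n, s (n + 2) = p * s (n + 1) + q * s n.

Lemma recurrent_shift (R : pzRingType) (p q : R) s a :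
  recurrent p q s -> recurrent p q (fun n => s (n - a)).
Proof.
move=> hs n /=.
rewrite (_ : n + 2 - a = (n - a) + 2); last by ring.
by rewrite hs (_ : n - a + 1 = n + 1 - a) //; ring.
Qed.

Lemma recurrent_lincomb (R : comPzRingType) (p q x y : R) s t :
  recurrent p q s -> recurrent p q t -> recurrent p q (fun n => x * s n + y * t n).
Proof. by move=> hs ht n /=; rewrite hs ht; ring. Qed.

Section FundamentalSolutions.

Variables (R : idomainType) (p q : R).
Hypothesis q_neq0 : q != 0.

Lemma recurrent_eq s t : recurrent p q s -> recurrent p q t ->
  s 0 = t 0 -> s 1 = t 1 -> s =1 t.
Proof.
move=> hs ht h0 h1.
have fwd (k : nat) : s k = t k /\ s k.+1 = t k.+1.
  elim: k => [|k [IH1 IH2]]; first by [].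
  split=> //.
  have -> : Posz k.+2 = Posz k + 2 by lia.
  by rewrite hs ht (_ : Posz k + 1 = k.+1) ?IH1 ?IH2 //; lia.
have bwd (k : nat) : s (- Posz k) = t (- Posz k) /\ s (- Posz k + 1) = t (- Posz k + 1).
  elim: k => [|k [IH1 IH2]]; first by [].
  have e : s (- Posz k.+1 + 2) = t (- Posz k.+1 + 2).
    by rewrite (_ : - Posz k.+1 + 2 = - Posz k + 1) //; lia.
  have e' : s (- Posz k.+1 + 1) = t (- Posz k.+1 + 1).
    by rewrite (_ : - Posz k.+1 + 1 = - Posz k) //; lia.
  split=> //.
  by rewrite hs ht e' in e; apply: (mulfI q_neq0); move/addrI: e.
by case=> k; [case: (fwd k) | rewrite NegzE; case: (bwd k.+1)].
Qed.

Variables u v : int -> R.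
Hypotheses (u_rec : recurrent p q u) (v_rec : recurrent p q v).
Hypotheses (u0 : u 0 = 1) (u1 : u 1 = 0) (v0 : v 0 = 0) (v1 : v 1 = 1).

Lemma recurrent_shift_decomp s a : recurrent p q s ->
  forall n, s (n - a) = s (- a) * u n + s (1 - a) * v n.
Proof.
move=> hs; apply: recurrent_eq.
- exact: recurrent_shift.
- exact: recurrent_lincomb.
- by rewrite u0 v0 sub0r mulr1 mulr0 addr0.
- by rewrite u1 v1 mulr0 mulr1 add0r.
Qed.

Lemma recurrent_three_shifts s (a b c d e n : int) : recurrent p q s ->
  (s (d - a) * s (e - b) - s (e - a) * s (d - b)) * s (n - c)
  = (s (d - c) * s (e - b) - s (e - c) * s (d - b)) * s (n - a)
  + (s (d - a) * s (e - c) - s (e - a) * s (d - c)) * s (n - b).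
Proof.
move=> hs; have dec := recurrent_shift_decomp _ hs.
rewrite (dec a d) (dec b e) (dec a e) (dec b d) (dec c d) (dec c e).
by rewrite (dec a n) (dec b n) (dec c n); ring.
Qed.

End FundamentalSolutions.

Lemma recseq_recurrent p q w0 w1 : q != 0 -> recurrent p q (recseq p q w0 w1).
Proof.
have fwdS n : recfwd p q w0 w1 n.+1 =
    ((recfwd p q w0 w1 n).2, p * (recfwd p q w0 w1 n).2 + q * (recfwd p q w0 w1 n).1).
  by rewrite /=; case: (recfwd p q w0 w1 n).
have bwdS n : recbwd p q w0 w1 n.+1 =
    (((recbwd p q w0 w1 n).2 - p * (recbwd p q w0 w1 n).1) / q, (recbwd p q w0 w1 n).1).
  by rewrite /=; case: (recbwd p q w0 w1 n).
move=> hq [k|[|[|j]]].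
- have -> : Posz k + 2 = k.+2 by lia.
  have -> : Posz k + 1 = k.+1 by lia.
  by rewrite /recseq !fwdS.
- have -> : Negz 0 + 2 = 1 by lia.
  have -> : Negz 0 + 1 = 0 by lia.
  by rewrite /recseq /=; field.
- have -> : Negz 1 + 2 = 0 by lia.
  have -> : Negz 1 + 1 = Negz 0 by lia.
  by rewrite /recseq /=; field.
- have -> : Negz j.+2 + 2 = Negz j by lia.
  have -> : Negz j.+2 + 1 = Negz j.+1 by lia.
  by rewrite /recseq [recbwd _ _ _ _ j.+3]bwdS [recbwd _ _ _ _ j.+2]bwdS /=; field.
Qed.

Lemma classical_recseq X :
  X = Fib \/ X = Luc \/ X = Jac \/ X = JacL \/ X = Pell \/ X = PellL ->
  exists p q w0 w1, q != 0 /\ X = recseq p q w0 w1.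
Proof.
case=> [->|[->|[->|[->|[->|->]]]]]; do 4 eexists; (split; last reflexivity);
  by rewrite ?oner_eq0 ?pnatr_eq0.
Qed.

Lemma eq_sumZ k f g : f =1 g -> sumZ k f = sumZ k g.
Proof. by move=> h; case: k => n /=; [|congr (- _)]; apply: eq_bigr => i _. Qed.

Lemma sumZ_telescope (h : int -> rat) k : sumZ k (fun r => h r - h (r - 1)) = h k - h (-1).
Proof.
case: k => n /=.
- elim: n => [|n IH]; first by rewrite big_nat1 sub0r.
  rewrite big_nat_recr //= IH (_ : Posz n.+1 - 1 = n); last by lia.
  by rewrite addrC addrA subrK.
- elim: n => [|n IH].
  + by rewrite big_geq // oppr0 (_ : Negz 0 = -1) ?subrr //; lia.
  + rewrite big_nat_recr //= opprD IH (_ : - Posz n.+1 = Negz n); last by lia.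
    rewrite (_ : Negz n - 1 = Negz n.+1); last by lia.
    by rewrite opprB addrC addrA subrK.
Qed.

(* For [A != 0] the summand is [h r - h (r - 1)] with
   [h r = A / C * (A / B) ^ r * Y (k - r)]; for [A = 0] only [r = 0] survives
   (the ratio is then [0], so [k >= 0] is forced). *)
Lemma sumZ_ratio_telescope (A B C : rat) (Y g : int -> rat) (k : int) :
  B != 0 -> C != 0 -> (k < 0 -> A / B != 0) ->
  (forall r, g r = (A / B) ^ r * ((A * Y (k - r) - B * Y (k - r + 1)) / C)) ->
  sumZ k g = A / C * (A / B) ^ k * Y 0 - B / C * Y (k + 1).
Proof.
move=> hB hC hk hg.
have [A0|hA] := eqVneq A 0.
  subst A.
  case: k hk hg => [n _|n hk]; last by move: (hk isT); rewrite mul0r eqxx.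
  move=> hg /=; rewrite big_nat_recl // big1 => [|i _]; last first.
    by rewrite hg /= exprSz !mul0r.
  rewrite hg /= !mul0r addr0 sub0r -exprnP expr0 mul1r (_ : Posz n - 0 = n); last by lia.
  by field.
have hAB : A / B != 0 by rewrite mulf_neq0 ?invr_eq0.
set h := fun r => A / C * (A / B) ^ r * Y (k - r).
rewrite (eq_sumZ k (g := fun r => h r - h (r - 1))) => [|r].
  rewrite sumZ_telescope /h subrr (_ : k - -1 = k + 1); last by ring.
  by rewrite exprN1; field; rewrite hA hB hC.
rewrite hg /h expfzDr // exprN1 (_ : k - (r + -1) = k - r + 1); last by ring.
by field; rewrite hA hB hC.
Qed.

Lemma sumZ_three_term (Y : int -> rat) (A B C : rat) (a b c k m : int) :
  (forall n, A * Y (n - c) = B * Y (n - a) + C * Y (n - b)) ->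
  B != 0 -> C != 0 -> (k < 0 -> A / B != 0) ->
  sumZ k (fun r => (A / B) ^ r * Y (m - k * (a - c) - b + c + (a - c) * r))
  = A / C * (A / B) ^ k * Y m - B / C * Y (m - (k + 1) * (a - c)).
Proof.
move=> hY hB hC hk.
rewrite (sumZ_ratio_telescope (Y := fun j => Y (m - j * (a - c))) hB hC hk) => [|r].
  by rewrite mul0r subr0.
congr (_ * _).
set n := m - k * (a - c) + c + (a - c) * r.
rewrite (_ : m - (k - r) * (a - c) = n - c); last by rewrite /n; ring.
rewrite (_ : m - (k - r + 1) * (a - c) = n - a); last by rewrite /n; ring.
rewrite (_ : m - k * (a - c) - b + c + (a - c) * r = n - b); last by rewrite /n; ring.
by rewrite hY; field.
Qed.

Theorem theorem5 (X : int -> rat)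
  (hX : X = Fib \/ X = Luc \/ X = Jac \/ X = JacL \/ X = Pell \/ X = PellL)
  (a b c d e k m : int) :
  let D  := X (d - a) * X (e - b) - X (e - a) * X (d - b) in
  let D1 := X (d - c) * X (e - b) - X (e - c) * X (d - b) in
  let D2 := X (d - a) * X (e - c) - X (e - a) * X (d - c) in
  [/\ (D1 != 0 -> D2 != 0 -> (k < 0 -> D / D1 != 0) ->
        sumZ k (fun r => (D / D1) ^ r * X (m - k * (a - c) - b + c + (a - c) * r))
        = D / D2 * (D / D1) ^ k * X m - D1 / D2 * X (m - (k + 1) * (a - c))),
      (D1 != 0 -> D2 != 0 -> (k < 0 -> D / D2 != 0) ->
        sumZ k (fun r => (D / D2) ^ r * X (m - k * (b - c) - a + c + (b - c) * r))
        = D / D1 * (D / D2) ^ k * X m - D2 / D1 * X (m - (k + 1) * (b - c)))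
    & (D1 != 0 -> D != 0 -> (k < 0 -> - D2 / D1 != 0) ->
        sumZ k (fun r => (- D2 / D1) ^ r * X (m - k * (a - b) + b - c + (a - b) * r))
        = D2 / D * (- D2 / D1) ^ k * X m + D1 / D * X (m - (k + 1) * (a - b)))].
Proof.
have [p [q [w0 [w1 [hq ->]]]]] := classical_recseq hX.
move=> D D1 D2.
have hI n : D * recseq p q w0 w1 (n - c)
    = D1 * recseq p q w0 w1 (n - a) + D2 * recseq p q w0 w1 (n - b).
  rewrite /D /D1 /D2.
  apply: (recurrent_three_shifts hq (recseq_recurrent _ 1 0 hq)
                                    (recseq_recurrent _ 0 1 hq)) => //.
  exact: recseq_recurrent.
split=> [h1 h2 | h1 h2 | h1 h0 hk].
- exact: sumZ_three_term.
- by apply: sumZ_three_term => // n; rewrite hI addrC.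
(* The third identity is the first one with the roles of [b] and [c] exchanged. *)
have hI' n : - D2 * recseq p q w0 w1 (n - b)
    = D1 * recseq p q w0 w1 (n - a) + - D * recseq p q w0 w1 (n - c).
  by rewrite !mulNr hI; ring.
rewrite (eq_sumZ _ (g := fun r => (- D2 / D1) ^ r
    * recseq p q w0 w1 (m - k * (a - b) - c + b + (a - b) * r))) => [|r]; last first.
  by congr (_ * recseq _ _ _ _ _); ring.
by rewrite (sumZ_three_term _ hI' h1) ?oppr_eq0 //; field.
Qed.
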